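(* Let $C$ be a Clifford system of rank $m+1$ on $\mathbb{R}^{2l}$ with $l>m+1$. If the Clifford foliation $(\mathbb{S}^{2l-1},\mathcal{F}_C)$ is homogeneous, then the FKM isoparametric foliation $(\mathbb{S}^{2l-1},\mathcal{F}'_C)$ is homogeneous as well.
   Context: A Clifford system $C$ of rank $m+1$ ($m\ge1$) on $\mathbb{R}^{2l}$, with the standard inner product, is an $(m+1)$-dimensional linear subspace $\mathbb{R}_C$ of the symmetric endomorphisms of $\mathbb{R}^{2l}$. It must admit a basis $P_0,\dots,P_m$ with $P_i^2=\mathrm{Id}$ and $P_iP_j=-P_jP_i$ for $i\ne j$, orthonormal for $\langle A,B\rangle=\frac1{2l}\mathrm{tr}(AB)$. The map $\pi_C$ is $\pi_C(x)=\sum_i\langle P_ix,x\rangle P_i$ on $\mathbb{S}^{2l-1}$. The Clifford foliation $\mathcal{F}_C$ is the partition of $\mathbb{S}^{2l-1}$ into fibers of $\pi_C$. The FKM foliation $\mathcal{F}'_C$ is the partition of $\mathbb{S}^{2l-1}$ into the sets $\{x:\|\pi_C(x)\|=r\}$, $r\in[0,1]$. Equivalently, these are the level sets of $F(x)=1-2\sum_{i}\langle P_ix,x\rangle^2$. A foliation is homogeneous if its leaves are the orbits of an isometric action of a connected Lie group (here a closed subgroup of $\mathrm{SO}(2l)$). *)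

From Stdlib Require Import Reals.
From mathcomp Require Import all_boot all_fingroup.

Set Implicit Arguments.
Unset Strict Implicit.
Unset Printing Implicit Defensive.

Local Open Scope R_scope.

Definition vec (n : nat) := 'I_n -> R.
Definition mat (n : nat) := 'I_n -> 'I_n -> R.

Definition rsum (n : nat) (f : 'I_n -> R) : R := \big[Rplus/0]_(i < n) f i.

Definition dot (n : nat) (x y : vec n) : R := rsum (fun i => x i * y i).
Definition mxv (n : nat) (A : mat n) (x : vec n) : vec n :=
  fun i => rsum (fun k => A i k * x k).
Definition mxm (n : nat) (A B : mat n) : mat n :=
  fun i j => rsum (fun k => A i k * B k j).
Definition idm (n : nat) : mat n := fun i j => if i == j then 1 else 0.
Arguments idm n : clear implicits.
Definition trm (n : nat) (A : mat n) : mat n := fun i j => A j i.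
Definition oppm (n : nat) (A : mat n) : mat n := fun i j => - A i j.
Definition trace (n : nat) (A : mat n) : R := rsum (fun i => A i i).
Definition det (n : nat) (A : mat n) : R :=
  \big[Rplus/0]_(s : 'S_n)
     ((if odd_perm s then -1 else 1) * \big[Rmult/1]_(i < n) A i (s i)).

Definition symmetric_mat (n : nat) (A : mat n) : Prop := forall i j, A i j = A j i.

Definition mip (n : nat) (A B : mat n) : R := trace (mxm A B) / INR n.
Definition mnorm (n : nat) (A : mat n) : R := sqrt (mip A A).

Definition clifford_system (n m : nat) (P : 'I_m.+1 -> mat n) : Prop :=
  (forall i, symmetric_mat (P i)) /\
  (forall i, mxm (P i) (P i) = idm n) /\
  (forall i j, i <> j -> mxm (P i) (P j) = oppm (mxm (P j) (P i))) /\
  (forall i j, mip (P i) (P j) = if i == j then 1 else 0).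

Definition pi_C (n m : nat) (P : 'I_m.+1 -> mat n) (x : vec n) : mat n :=
  fun a b => rsum (fun i : 'I_m.+1 => dot (mxv (P i) x) x * P i a b).

Definition sphere (n : nat) (x : vec n) : Prop := dot x x = 1.

(* A foliation of S^{n-1} is encoded by its "same leaf" relation. *)
Definition clifford_leaf (n m : nat) (P : 'I_m.+1 -> mat n) (x y : vec n) : Prop :=
  pi_C P x = pi_C P y.
Definition fkm_leaf (n m : nat) (P : 'I_m.+1 -> mat n) (x y : vec n) : Prop :=
  mnorm (pi_C P x) = mnorm (pi_C P y).

Definition SO_subgroup (n : nat) (G : mat n -> Prop) : Prop :=
  (forall A, G A -> mxm (trm A) A = idm n /\ det A = 1) /\
  G (idm n) /\
  (forall A B, G A -> G B -> G (mxm A B)) /\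
  (forall A, G A -> G (trm A)).

Definition closed_set (n : nat) (G : mat n -> Prop) : Prop :=
  forall (s : nat -> mat n) (A : mat n),
    (forall k, G (s k)) ->
    (forall i j, Un_cv (fun k => s k i j) (A i j)) -> G A.

Definition rel_open (n : nat) (G U : mat n -> Prop) : Prop :=
  forall A, G A -> U A ->
    exists eps, 0 < eps /\
      forall B, G B -> (forall i j, Rabs (B i j - A i j) < eps) -> U B.

Definition connected_set (n : nat) (G : mat n -> Prop) : Prop :=
  forall U V : mat n -> Prop,
    rel_open G U -> rel_open G V ->
    (forall A, G A -> U A \/ V A) ->
    (forall A, G A -> U A -> V A -> False) ->
    (exists A, G A /\ U A) -> (exists A, G A /\ V A) -> False.

Definition homogeneous_foliation (n : nat) (L : vec n -> vec n -> Prop) : Prop :=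
  exists G : mat n -> Prop,
    SO_subgroup G /\ closed_set G /\ connected_set G /\
    forall x y, sphere x -> sphere y ->
      (L x y <-> exists g, G g /\ mxv g x = y).

(* Let G be a connected closed subgroup of SO(n) whose orbits on the sphere
   are the fibres of pi_C.  For i <> j the matrix
       R_ij(t) = cos(t/2) Id + sin(t/2) P_i P_j
   is a rotation of R^n, and conjugation by R_ij(t) rotates the plane of the
   Clifford system spanned by P_i and P_j by the angle t, fixing the other P_k.
   Hence R_ij(t) acts on the coefficient vector (<P_k x, x>)_k of pi_C(x) by a
   plane rotation and preserves |pi_C(x)|.  Let G' be the closure of the set of
   finite products of elements of G and matrices R_ij(t).  Then
   - G' is a closed subgroup of SO(n) preserving |pi_C|;
   - G' is connected: every generator is joined to Id inside G' by a connected
     set (a translate of G, or the path t |-> R_ij(t));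
   - Givens rotations R_0j(t) move any x to a point whose coefficient vector is
     (|pi_C(x)|, 0, ..., 0), so two points with the same |pi_C| are moved into
     one fibre of pi_C, i.e. into one orbit of G.
   So the orbits of G' are the FKM leaves. *)

From Pilot Require Import Defs.
From Stdlib Require Import Reals Lra Lia FunctionalExtensionality.
From Stdlib Require Import ClassicalEpsilon Classical.
From mathcomp Require Import all_boot all_fingroup all_algebra.
From mathcomp Require Import Rstruct.
From mathcomp Require ring.

Set Implicit Arguments.
Unset Strict Implicit.
Unset Printing Implicit Defensive.

Import GRing.Theory.

(* The matrices of the statement are functions; MathComp matrices with the
   same entries give access to the matrix algebra library. *)
Section MatrixBridge.
Variable n : nat.
Implicit Types (A B C : mat n) (x y : vec n).
Local Open Scope ring_scope.

Definition M A : 'M[R]_n := \matrix_(i, j) A i j.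
Definition V x : 'cV[R]_n := \col_i x i.
Definition ofM (X : 'M[R]_n) : mat n := fun i j => X i j.

Lemma M_inj : injective M.
Proof.
move=> A B /matrixP eqAB; apply: functional_extensionality => i.
by apply: functional_extensionality => j; have := eqAB i j; rewrite !mxE.
Qed.

Lemma V_inj : injective V.
Proof.
move=> x y /matrixP eqxy; apply: functional_extensionality => i.
by have := eqxy i ord0; rewrite !mxE.
Qed.

Lemma ofMK X : M (ofM X) = X.
Proof. by apply/matrixP => i j; rewrite mxE. Qed.

Lemma M_mxm A B : M (mxm A B) = M A *m M B.
Proof.
apply/matrixP => i j; rewrite !mxE /mxm /rsum.
by apply: eq_bigr => k _; rewrite !mxE.
Qed.

Lemma M_trm A : M (trm A) = (M A)^T.
Proof. by apply/matrixP => i j; rewrite !mxE. Qed.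

Lemma M_idm : M (Defs.idm n) = 1%:M.
Proof. by apply/matrixP => i j; rewrite !mxE /Defs.idm; case: (i == j). Qed.

Lemma V_mxv A x : V (mxv A x) = M A *m V x.
Proof.
apply/matrixP => i j; rewrite !mxE /mxv /rsum.
by apply: eq_bigr => k _; rewrite !mxE.
Qed.

Lemma dotE x y : dot x y = ((V x)^T *m V y) ord0 ord0.
Proof. by rewrite !mxE /dot /rsum; apply: eq_bigr => k _; rewrite !mxE. Qed.

Lemma detE A : det A = \det (M A).
Proof.
rewrite /det /determinant; apply: eq_bigr => s _.
have -> : \prod_(i < n) M A i (s i) = \big[Rmult/1%R]_(i < n) A i (s i).
  by apply: eq_bigr => i _; rewrite mxE.
by case: (odd_perm s); rewrite /= ?expr1 ?expr0.
Qed.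

Lemma traceE A : trace A = \tr (M A).
Proof. by rewrite /trace /mxtrace /rsum; apply: eq_bigr => i _; rewrite mxE. Qed.

Lemma mxm_assoc A B C : mxm (mxm A B) C = mxm A (mxm B C).
Proof. by apply: M_inj; rewrite !M_mxm mulmxA. Qed.

Lemma mxv_mxm A B x : mxv (mxm A B) x = mxv A (mxv B x).
Proof. by apply: V_inj; rewrite !V_mxv M_mxm mulmxA. Qed.

Lemma trm_mxm A B : trm (mxm A B) = mxm (trm B) (trm A).
Proof.
by apply: M_inj; rewrite (M_trm (mxm A B)) !M_mxm (M_trm B) (M_trm A) trmx_mul.
Qed.

Lemma mxm_idl A : mxm (Defs.idm n) A = A.
Proof. by apply: M_inj; rewrite M_mxm M_idm mul1mx. Qed.

Lemma mxm_idr A : mxm A (Defs.idm n) = A.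
Proof. by apply: M_inj; rewrite M_mxm M_idm mulmx1. Qed.

Lemma trm_idm : trm (Defs.idm n) = Defs.idm n.
Proof. by apply: M_inj; rewrite M_trm M_idm trmx1. Qed.

Lemma mxv_idm x : mxv (Defs.idm n) x = x.
Proof. by apply: V_inj; rewrite V_mxv M_idm mul1mx. Qed.

Lemma det_mxm A B : det (mxm A B) = det A * det B.
Proof. by rewrite !detE M_mxm det_mulmx. Qed.

Lemma det_idm : det (Defs.idm n) = 1.
Proof. by rewrite detE M_idm det1. Qed.

Definition orthogonal A : Prop := mxm (trm A) A = Defs.idm n.

Lemma orthogonal_back A x : orthogonal A -> mxv (trm A) (mxv A x) = x.
Proof. by move=> oA; rewrite -mxv_mxm oA mxv_idm. Qed.

Lemma sphere_orthogonal A x : orthogonal A -> sphere x -> sphere (mxv A x).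
Proof.
move=> oA; rewrite /sphere !dotE V_mxv trmx_mul -mulmxA (mulmxA (M A)^T).
by rewrite -M_trm -M_mxm oA M_idm mul1mx.
Qed.

End MatrixBridge.

Section SequentialLimits.
Local Open Scope R_scope.

Lemma cv_const (c : R) : Un_cv (fun _ => c) c.
Proof. move=> e he; exists 0%nat => k _; rewrite /Rdist Rminus_diag Rabs_R0; lra. Qed.

Lemma cv_ext (u v : nat -> R) l : (forall k, u k = v k) -> Un_cv u l -> Un_cv v l.
Proof.
by move=> uv; have -> : v = u by apply: functional_extensionality => k; rewrite uv.
Qed.

Lemma cv_big (op : R -> R -> R) (idx : R) :
  (forall u v a b, Un_cv u a -> Un_cv v b -> Un_cv (fun k => op (u k) (v k)) (op a b)) ->
  forall (T : Type) (r : seq T) (F : nat -> T -> R) (f : T -> R),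
  (forall t, Un_cv (fun k => F k t) (f t)) ->
  Un_cv (fun k => \big[op/idx]_(t <- r) F k t) (\big[op/idx]_(t <- r) f t).
Proof.
move=> cv_op T r F f cvF; elim: r => [|a r IH].
  rewrite big_nil; apply: (cv_ext (u := fun _ => idx)); last exact: cv_const.
  by move=> k; rewrite big_nil.
rewrite big_cons.
apply: (cv_ext (u := fun k => op (F k a) (\big[op/idx]_(t <- r) F k t))).
  by move=> k; rewrite big_cons.
exact: cv_op.
Qed.

Lemma cv_rsum n (F : nat -> 'I_n -> R) (f : 'I_n -> R) :
  (forall t, Un_cv (fun k => F k t) (f t)) -> Un_cv (fun k => rsum (F k)) (rsum f).
Proof. exact: (@cv_big Rplus 0 CV_plus). Qed.

Definition mcv n (s : nat -> mat n) (A : mat n) := forall i j, Un_cv (fun k => s k i j) (A i j).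
Definition vcv n (s : nat -> vec n) (x : vec n) := forall i, Un_cv (fun k => s k i) (x i).

Lemma cv_cstm n (A : mat n) : mcv (fun _ => A) A.
Proof. move=> i j; exact: cv_const. Qed.

Lemma cv_cstv n (x : vec n) : vcv (fun _ => x) x.
Proof. move=> i; exact: cv_const. Qed.

Lemma cv_mxm n (s t : nat -> mat n) A B :
  mcv s A -> mcv t B -> mcv (fun k => mxm (s k) (t k)) (mxm A B).
Proof. move=> cvs cvt i j; apply: cv_rsum => k; exact: CV_mult. Qed.

Lemma cv_trm n (s : nat -> mat n) A : mcv s A -> mcv (fun k => trm (s k)) (trm A).
Proof. by move=> cvs i j; apply: cvs. Qed.

Lemma cv_mxv n (s : nat -> mat n) (t : nat -> vec n) A x :
  mcv s A -> vcv t x -> vcv (fun k => mxv (s k) (t k)) (mxv A x).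
Proof. move=> cvs cvt i; apply: cv_rsum => k; exact: CV_mult. Qed.

Lemma cv_dot n (s t : nat -> vec n) x y :
  vcv s x -> vcv t y -> Un_cv (fun k => dot (s k) (t k)) (dot x y).
Proof. move=> cvs cvt; apply: cv_rsum => k; exact: CV_mult. Qed.

Lemma cv_det n (s : nat -> mat n) A : mcv s A -> Un_cv (fun k => det (s k)) (det A).
Proof.
move=> cvs; apply: (@cv_big Rplus 0 CV_plus) => p; apply: CV_mult; first exact: cv_const.
by apply: (@cv_big Rmult 1 CV_mult) => i; apply: cvs.
Qed.

End SequentialLimits.

Section EntrywiseTopology.
Local Open Scope R_scope.

Definition close n (A B : mat n) d := forall i j, Rabs (B i j - A i j) < d.

Lemma finite_delta (T : finType) (Q : T -> R -> Prop) :
  (forall t, exists d, 0 < d /\ forall d', 0 < d' <= d -> Q t d') ->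
  exists d, 0 < d /\ forall t, Q t d.
Proof.
move=> hQ.
suff [d [d_gt0 hd]] : exists d, 0 < d /\
    forall t, t \in enum T -> forall d', 0 < d' <= d -> Q t d'.
  by exists d; split => // t; apply: hd; [rewrite mem_enum | lra].
elim: (enum T) => [|a r [d [d_gt0 hd]]]; first by exists 1; split => //; lra.
have [da [da_gt0 hda]] := hQ a.
exists (Rmin d da); split; first exact: Rmin_glb_lt.
move=> t; rewrite in_cons => /orP [/eqP -> | tr] d' hd'.
  by apply: hda; have := Rmin_r d da; lra.
by apply: hd => //; have := Rmin_l d da; lra.
Qed.

Lemma finite_eventually (T : finType) (Q : T -> nat -> Prop) :
  (forall t, exists N, forall k, (N <= k)%coq_nat -> Q t k) ->
  exists N, forall t k, (N <= k)%coq_nat -> Q t k.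
Proof.
move=> hQ.
suff [N hN] : exists N, forall t, t \in enum T -> forall k, (N <= k)%coq_nat -> Q t k.
  by exists N => t; apply: hN; rewrite mem_enum.
elim: (enum T) => [|a r [N hN]]; first by exists 0%nat.
have [Na hNa] := hQ a.
exists (Nat.max N Na) => t; rewrite in_cons => /orP [/eqP -> | tr] k hk.
  by apply: hNa; lia.
by apply: hN => //; lia.
Qed.

Lemma mcv_close n (s : nat -> mat n) A : mcv s A ->
  forall e, 0 < e -> exists N, forall k, (N <= k)%coq_nat -> close A (s k) e.
Proof.
move=> cvs e e_gt0.
have [N hN] := @finite_eventually ('I_n * 'I_n)%type
  (fun p k => Rabs (s k p.1 p.2 - A p.1 p.2) < e) (fun p => cvs p.1 p.2 e e_gt0).
by exists N => k hk i j; apply: (hN (i, j)).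
Qed.

Lemma inv_succ_small (e : R) :
  0 < e -> exists N, forall k, (N <= k)%coq_nat -> / INR (S k) < e.
Proof.
move=> e_gt0; have [N [hN N_gt0]] := archimed_cor1 e e_gt0.
exists N => k hk; apply: Rle_lt_trans hN; apply: Rinv_le_contravar.
  by apply: lt_0_INR; lia.
by apply: le_INR; lia.
Qed.

Lemma seq_continuous_close n (f : mat n -> mat n) A :
  (forall s, mcv s A -> mcv (fun k => f (s k)) (f A)) ->
  forall e, 0 < e -> exists d, 0 < d /\ forall B, close A B d -> close (f A) (f B) e.
Proof.
move=> fcont e e_gt0.
suff [d [d_gt0 hd]] : exists d, 0 < d /\ forall p : ('I_n * 'I_n)%type,
    forall B, close A B d -> Rabs (f B p.1 p.2 - f A p.1 p.2) < e.
  by exists d; split => // B hB i j; apply: (hd (i, j)).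
apply: finite_delta => -[i j] /=; apply: NNPP => no_delta.
have far : forall d, 0 < d -> exists B, close A B d /\ e <= Rabs (f B i j - f A i j).
  move=> d d_gt0; apply: NNPP => no_far; apply: no_delta.
  exists d; split => // d' hd' B hB; apply: Rnot_le_lt => hle; apply: no_far.
  by exists B; split => // i' j'; have := hB i' j'; lra.
have inv_gt0 k : 0 < / INR (S k) by apply: Rinv_0_lt_compat; apply: lt_0_INR; lia.
pose s k := proj1_sig (constructive_indefinite_description _ (far _ (inv_gt0 k))).
have hs k : close A (s k) (/ INR (S k)) /\ e <= Rabs (f (s k) i j - f A i j).
  exact: proj2_sig (constructive_indefinite_description _ (far _ (inv_gt0 k))).
have cvs : mcv s A.
  move=> i' j' eps eps_gt0; have [N hN] := inv_succ_small eps_gt0.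
  exists N => k hk; rewrite /Rdist; have := (proj1 (hs k)) i' j'; have := hN k hk; lra.
have [N hN] := fcont s cvs i j e e_gt0.
by have := hN N (Nat.le_refl N); rewrite /Rdist; have := proj2 (hs N); lra.
Qed.

Lemma image_connected n (G : mat n -> Prop) (f : mat n -> mat n) :
  connected_set G ->
  (forall A s, mcv s A -> mcv (fun k => f (s k)) (f A)) ->
  connected_set (fun B => exists h, G h /\ B = f h).
Proof.
move=> Gconn fcont U V openU openV cover disj [_ [[a [Ga ->]] Ua]] [_ [[b [Gb ->]] Vb]].
have open_pre (W : mat n -> Prop) : rel_open (fun B => exists h, G h /\ B = f h) W ->
    rel_open G (fun h => W (f h)).
  move=> openW X GX WX; have [e [e_gt0 hW]] := openW (f X) (ex_intro _ X (conj GX erefl)) WX.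
  have [d [d_gt0 hd]] := seq_continuous_close (fcont X) e_gt0.
  by exists d; split => // Y GY hY; apply: hW; [exists Y | exact: hd].
apply: (Gconn (fun h => U (f h)) (fun h => V (f h))).
- exact: open_pre.
- exact: open_pre.
- by move=> X GX; apply: cover; exists X.
- by move=> X GX; apply: disj; exists X.
- by exists a.
- by exists b.
Qed.

Lemma path_local n (f : R -> mat n) (W : mat n -> Prop) s0 :
  (forall i j, continuity (fun s => f s i j)) ->
  rel_open (fun B => exists s, B = f s) W -> W (f s0) ->
  exists d, 0 < d /\ forall s, Rabs (s - s0) < d -> W (f s).
Proof.
move=> fcont openW Ws0.
have [e [e_gt0 hW]] := openW (f s0) (ex_intro _ s0 erefl) Ws0.
have entry_delta (p : 'I_n * 'I_n) : exists d, 0 < d /\ forall d', 0 < d' <= d ->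
    forall s, Rabs (s - s0) < d' -> Rabs (f s p.1 p.2 - f s0 p.1 p.2) < e.
  have [d [d_gt0 hd]] := fcont p.1 p.2 s0 e e_gt0.
  exists d; split => // d' hd' s hs.
  case: (Req_dec s s0) => [-> | neq]; first by rewrite Rminus_diag Rabs_R0.
  have near : Rabs (s - s0) < d by lra.
  by apply: (hd s); split; [split => //; exact: not_eq_sym | exact: near].
have [d [d_gt0 hd]] := finite_delta entry_delta.
by exists d; split => // s hs; apply: hW; [exists s | move=> i j; exact: (hd (i, j) s hs)].
Qed.

(* A continuous path of matrices is connected: along a separation, the sign
   h = +1 on U, -1 on V is locally constant, hence continuous, and the
   intermediate value theorem gives a zero of h, which is absurd. *)
Lemma path_connected n (f : R -> mat n) :
  (forall i j, continuity (fun s => f s i j)) ->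
  connected_set (fun B => exists s, B = f s).
Proof.
move=> fcont U V openU openV cover disj [_ [[a ->] Ua]] [_ [[b ->] Vb]].
pose h s := if excluded_middle_informative (U (f s)) then 1 else -1.
have h_loc s0 : exists d, 0 < d /\ forall s, Rabs (s - s0) < d -> h s = h s0.
  rewrite /h; case: (excluded_middle_informative (U (f s0))) => Us0.
    have [d [d_gt0 hd]] := path_local fcont openU Us0.
    exists d; split => // s hs; case: excluded_middle_informative => // nUs.
    by case: (nUs (hd s hs)).
  have Vs0 : V (f s0) by case: (cover (f s0) (ex_intro _ s0 erefl)).
  have [d [d_gt0 hd]] := path_local fcont openV Vs0.
  exists d; split => // s hs; case: excluded_middle_informative => // Us.
  by case: (disj (f s) (ex_intro _ s erefl) Us (hd s hs)).
have h_cont : continuity h.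
  move=> s0 e e_gt0; have [d [d_gt0 hd]] := h_loc s0.
  exists d; split => // s [_ hs]; rewrite /= /Rdist in hs *.
  by rewrite hd // Rminus_diag Rabs_R0.
have ha : h a = 1 by rewrite /h; case: excluded_middle_informative.
have hb : h b = -1.
  rewrite /h; case: excluded_middle_informative => // Ub.
  by case: (disj (f b) (ex_intro _ b erefl) Ub Vb).
have h_neq0 s : h s <> 0 by rewrite /h; case: excluded_middle_informative => Us /= eq0; lra.
suff [z hz] : exists z, h z = 0 by case: (h_neq0 z).
case: (Rtotal_order a b) => [ab | [eq_ab | ba]].
- have hopp : continuity (fun s => - h s) by apply: continuity_opp.
  have ha_neg : - h a < 0 by rewrite ha; lra.
  have hb_pos : 0 < - h b by rewrite hb; lra.
  have [z [_ hz]] := IVT (fun s => - h s) a b hopp ab ha_neg hb_pos.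
  by exists z; rewrite /= in hz; lra.
- by rewrite eq_ab in Ua; case: (disj (f b) (ex_intro _ b erefl) Ua Vb).
- have hb_neg : h b < 0 by rewrite hb; lra.
  have ha_pos : 0 < h a by rewrite ha; lra.
  by have [z [_ hz]] := IVT h b a h_cont ba hb_neg ha_pos; exists z.
Qed.

Lemma connected_same_side n (W T U V : mat n -> Prop) :
  connected_set T -> (forall A, T A -> W A) ->
  rel_open W U -> rel_open W V ->
  (forall A, W A -> U A \/ V A) -> (forall A, W A -> U A -> V A -> False) ->
  forall A B, T A -> T B -> U A -> U B.
Proof.
move=> Tconn TW openU openV cover disj A B TA TB UA; apply: NNPP => nUB.
have VB : V B by case: (cover B (TW B TB)).
have open_sub (Z : mat n -> Prop) : rel_open W Z -> rel_open T Z.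
  move=> openZ X TX ZX; have [e [e_gt0 hZ]] := openZ X (TW X TX) ZX.
  by exists e; split => // Y TY; apply: hZ; apply: TW.
apply: (Tconn U V (open_sub U openU) (open_sub V openV)).
- by move=> X TX; apply: cover; apply: TW.
- by move=> X TX; apply: disj; apply: TW.
- by exists A.
- by exists B.
Qed.

Lemma closed_diff_open n (W U : mat n -> Prop) :
  Defs.closed_set W -> rel_open W U -> Defs.closed_set (fun X => W X /\ ~ U X).
Proof.
move=> Wclosed openU s A hs cvs.
have WA : W A by apply: (Wclosed s) => // k; exact: (proj1 (hs k)).
split => // UA; have [e [e_gt0 hU]] := openU A WA UA.
have [N hN] := mcv_close cvs e_gt0.
by apply: (proj2 (hs N)); apply: hU; [exact: (proj1 (hs N)) | exact: hN].
Qed.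

Lemma closed_preimage n (f : mat n -> mat n) (C : mat n -> Prop) :
  (forall s A, mcv s A -> mcv (fun k => f (s k)) (f A)) ->
  Defs.closed_set C -> Defs.closed_set (fun X => C (f X)).
Proof. by move=> fcont Cclosed s A hs cvs; apply: (Cclosed _ _ hs (fcont s A cvs)). Qed.

Lemma closed_SO n : Defs.closed_set (fun A : mat n => orthogonal A /\ det A = 1).
Proof.
move=> s A hs cvs; split.
  apply: functional_extensionality => i; apply: functional_extensionality => j.
  apply: (UL_sequence _ _ _ (cv_mxm (cv_trm cvs) cvs i j)).
  apply: (cv_ext (u := fun _ => Defs.idm n i j)); last exact: cv_const.
  by move=> k; rewrite (proj1 (hs k)).
apply: (UL_sequence _ _ _ (cv_det cvs)); apply: (cv_ext (u := fun _ => 1)); last exact: cv_const.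
by move=> k; rewrite (proj2 (hs k)).
Qed.

End EntrywiseTopology.

(* Half-angle functions; R_ij(t) = ch t Id + sh t P_i P_j.  The algebraic
   identities are stated in ring notation, where they are used. *)
Section HalfAngle.
Local Open Scope R_scope.

Definition ch (t : R) := cos (t / 2).
Definition sh (t : R) := sin (t / 2).

Lemma ch_opp t : (ch (- t) = ch t)%R.
Proof. by have e : ch (- t) = ch t by rewrite /ch -cos_neg; congr cos; lra. Qed.

Lemma sh_opp t : (sh (- t) = - sh t)%R.
Proof. by have e : sh (- t) = - sh t by rewrite /sh -sin_neg; congr sin; lra. Qed.

Lemma ch0 : (ch 0 = 1)%R.
Proof. by have e : ch 0 = 1 by rewrite /ch /Rdiv Rmult_0_l cos_0. Qed.

Lemma sh0 : (sh 0 = 0)%R.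
Proof. by have e : sh 0 = 0 by rewrite /sh /Rdiv Rmult_0_l sin_0. Qed.

Lemma continuity_ch : continuity ch.
Proof.
apply: (continuity_comp (fun s => s / 2) cos); last exact: continuity_cos.
apply: continuity_mult; [exact: derivable_continuous derivable_id | exact: continuity_const].
Qed.

Lemma continuity_sh : continuity sh.
Proof.
apply: (continuity_comp (fun s => s / 2) sin); last exact: continuity_sin.
apply: continuity_mult; [exact: derivable_continuous derivable_id | exact: continuity_const].
Qed.

Lemma continuity_ch_sh_comb (c d : R) : continuity (fun s => ch s * c + sh s * d).
Proof.
apply: (continuity_plus (fun s => ch s * c) (fun s => sh s * d)).
  by apply: (continuity_mult ch (fun _ => c)); [exact: continuity_ch | apply: continuity_const].
by apply: (continuity_mult sh (fun _ => d)); [exact: continuity_sh | apply: continuity_const].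
Qed.

Lemma cos_sin_sq t : (cos t * cos t + sin t * sin t = 1)%R.
Proof.
by have e : cos t * cos t + sin t * sin t = 1 by have := sin2_cos2 t; rewrite /Rsqr; lra.
Qed.

Lemma ch_sh_sq t : (ch t * ch t + sh t * sh t = 1)%R.
Proof. exact: cos_sin_sq. Qed.

Lemma ch_sh_cos t : (ch t * ch t - sh t * sh t = cos t)%R.
Proof. have -> : cos t = cos (2 * (t / 2)) by congr cos; field. by rewrite cos_2a. Qed.

Lemma ch_sh_sin t : (sh t * ch t + sh t * ch t = sin t)%R.
Proof.
have -> : sin t = sin (2 * (t / 2)) by congr sin; field.
by rewrite sin_2a -RmultE -RplusE Rplus_diag Rmult_assoc.
Qed.

End HalfAngle.

Section CliffordRotations.
Import ring.
Local Open Scope ring_scope.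
Variables (n m : nat) (p : 'I_m.+1 -> 'M[R]_n).
Hypothesis p_sym : forall i, (p i)^T = p i.
Hypothesis p_sq : forall i, p i *m p i = 1%:M.
Hypothesis p_anti : forall i j, i <> j -> p i *m p j = - (p j *m p i).

Lemma mul_lin_l (a b : R) (K Y : 'M[R]_n) : (a *: 1%:M + b *: K) *m Y = a *: Y + b *: (K *m Y).
Proof. by rewrite mulmxDl -!scalemxAl mul1mx. Qed.

Lemma mul_lin_r (a b : R) (K Y : 'M[R]_n) : Y *m (a *: 1%:M + b *: K) = a *: Y + b *: (Y *m K).
Proof. by rewrite mulmxDr -!scalemxAr mulmx1. Qed.

Variables (i j : 'I_m.+1).
Hypothesis neq_ij : i <> j.

Definition J := p i *m p j.
Definition rotM (t : R) : 'M[R]_n := ch t *: 1%:M + sh t *: J.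

Let neq_ji := not_eq_sym neq_ij.

Lemma J_tr : J^T = - J.
Proof. by rewrite /J trmx_mul !p_sym (p_anti neq_ji). Qed.

Lemma J_pi : J *m p i = - p j.
Proof. by rewrite /J -mulmxA (p_anti neq_ji) mulmxN mulmxA p_sq mul1mx. Qed.

Lemma J_pj : J *m p j = p i.
Proof. by rewrite /J -mulmxA p_sq mulmx1. Qed.

Lemma pi_J : p i *m J = p j.
Proof. by rewrite /J mulmxA p_sq mul1mx. Qed.

Lemma pj_J : p j *m J = - p i.
Proof. by rewrite /J mulmxA (p_anti neq_ji) mulNmx -mulmxA p_sq mulmx1. Qed.

Lemma J_sq : J *m J = - 1%:M.
Proof. by rewrite {1}/J -mulmxA pj_J mulmxN p_sq. Qed.

Lemma pk_J k : k <> i -> k <> j -> p k *m J = J *m p k.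
Proof.
move=> neq_ki neq_kj.
rewrite /J mulmxA (p_anti neq_ki) mulNmx -[p i *m p k *m p j]mulmxA (p_anti neq_kj).
by rewrite mulmxN opprK mulmxA.
Qed.

Lemma rotM_tr t : (rotM t)^T = rotM (- t).
Proof. by rewrite /rotM linearD /= !linearZ /= trmx1 J_tr ch_opp sh_opp scalerN scaleNr. Qed.

Lemma rotM_orth t : (rotM t)^T *m rotM t = 1%:M.
Proof.
rewrite rotM_tr {1}/rotM mul_lin_l /rotM mul_lin_r J_sq ch_opp sh_opp.
apply/matrixP => r q; rewrite !mxE -[RHS]mul1r -(ch_sh_sq t); ring.
Qed.

Lemma rotM_conj_i t : (rotM t)^T *m p i *m rotM t = cos t *: p i + sin t *: p j.
Proof.
rewrite rotM_tr {1}/rotM mul_lin_l J_pi /rotM mulmxDl -!scalemxAl mulNmx !mul_lin_r.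
rewrite pi_J pj_J ch_opp sh_opp -(ch_sh_cos t) -(ch_sh_sin t).
by apply/matrixP => r q; rewrite !mxE; ring.
Qed.

Lemma rotM_conj_j t : (rotM t)^T *m p j *m rotM t = cos t *: p j - sin t *: p i.
Proof.
rewrite rotM_tr {1}/rotM mul_lin_l J_pj /rotM mulmxDl -!scalemxAl !mul_lin_r.
rewrite pi_J pj_J ch_opp sh_opp -(ch_sh_cos t) -(ch_sh_sin t).
by apply/matrixP => r q; rewrite !mxE; ring.
Qed.

Lemma rotM_conj_k k t : k <> i -> k <> j -> (rotM t)^T *m p k *m rotM t = p k.
Proof.
move=> neq_ki neq_kj; rewrite -mulmxA.
have -> : p k *m rotM t = rotM t *m p k by rewrite mul_lin_r mul_lin_l pk_J.
by rewrite mulmxA rotM_orth mul1mx.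
Qed.

Lemma rotM_square u t : cos u = ch t -> sin u = sh t -> rotM t = rotM u *m rotM u.
Proof.
move=> cos_u sin_u; rewrite {1}/rotM -cos_u -sin_u -(ch_sh_cos u) -(ch_sh_sin u).
rewrite {2}/rotM mul_lin_l /rotM mul_lin_r J_sq.
by apply/matrixP => r q; rewrite !mxE; ring.
Qed.

(* det R_ij(t) = det (R_ij(t/2))^2 = 1, the last equality by orthogonality. *)
Lemma rotM_det t : \det (rotM t) = 1.
Proof.
rewrite (@rotM_square (Rdiv t (IZR 2)) t) // det_mulmx.
by have := congr1 determinant (rotM_orth (Rdiv t (IZR 2))); rewrite det_mulmx det_tr det1.
Qed.

End CliffordRotations.

Section PiCoefficients.
Import ring.
Local Open Scope ring_scope.
Variables (n m : nat) (P : 'I_m.+1 -> mat n).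
Hypothesis hP : clifford_system P.

Definition p i := M (P i).

Lemma p_sym i : (p i)^T = p i.
Proof. by apply/matrixP => a b; rewrite !mxE; case: hP => sym _; rewrite sym. Qed.

Lemma p_sq i : p i *m p i = 1%:M.
Proof. by rewrite /p -M_mxm; case: hP => _ [sq _]; rewrite sq M_idm. Qed.

Lemma p_anti i j : i <> j -> p i *m p j = - (p j *m p i).
Proof.
move=> neq_ij; rewrite /p -!M_mxm; case: hP => _ [_ [anti _]]; rewrite anti //.
by apply/matrixP => a b; rewrite !mxE.
Qed.

Definition qf (B : 'M[R]_n) (v : 'cV[R]_n) : R := (v^T *m B *m v) ord0 ord0.

Lemma qf_lin a b X Y v : qf (a *: X + b *: Y) v = a * qf X v + b * qf Y v.
Proof. by rewrite /qf mulmxDr mulmxDl -!scalemxAr -!scalemxAl !mxE. Qed.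

Definition coef (x : vec n) k := dot (mxv (P k) x) x.

Lemma coefE x k : coef x k = qf (p k) (V x).
Proof. by rewrite /coef dotE V_mxv trmx_mul p_sym. Qed.

Lemma coef_mxv A x k : coef (mxv A x) k = qf ((M A)^T *m p k *m M A) (V x).
Proof. by rewrite coefE V_mxv /qf trmx_mul !mulmxA. Qed.

Definition rot i j t : mat n := ofM (rotM p i j t).

Lemma pi_CE x : pi_C P x = fun a b => rsum (fun k => coef x k * P k a b).
Proof. by []. Qed.

Lemma M_rot i j t : M (rot i j t) = rotM p i j t.
Proof. exact: ofMK. Qed.

Definition pi_sqnorm x := rsum (fun k => coef x k * coef x k).

Lemma mip_pi x : mip (pi_C P x) (pi_C P x) = pi_sqnorm x.
Proof.
have mipE (A B : mat n) : mip A B = \tr (M A *m M B) / INR n by rewrite /mip traceE M_mxm.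
have p_orthonormal a b : \tr (p a *m p b) / INR n = if a == b then 1 else 0.
  by rewrite -mipE; case: hP => _ [_ [_ ->]].
have M_pi : M (pi_C P x) = \sum_k coef x k *: p k.
  by apply/matrixP => a b; rewrite mxE summxE; apply: eq_bigr => k _; rewrite !mxE.
have tr_sum (r : seq 'I_m.+1) (F : 'I_m.+1 -> 'M[R]_n) :
    \tr (\sum_(k <- r) F k) = \sum_(k <- r) \tr (F k).
  by apply: big_morph; [exact: mxtraceD | exact: mxtrace0].
rewrite mipE M_pi mulmx_suml tr_sum mulr_suml /pi_sqnorm /rsum; apply: eq_bigr => a _.
rewrite -scalemxAl mxtraceZ mulmx_sumr tr_sum mulr_sumr mulr_suml.
rewrite (bigD1 a) //= big1 => [|b neq_ba].
  by rewrite addr0 -scalemxAr mxtraceZ -!mulrA p_orthonormal eqxx mulr1.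
by rewrite -scalemxAr mxtraceZ -!mulrA p_orthonormal eq_sym (negbTE neq_ba) !mulr0.
Qed.

Lemma rot0 i j : rot i j 0 = Defs.idm n.
Proof. by apply: M_inj; rewrite M_rot M_idm /rotM ch0 sh0 scale1r scale0r addr0. Qed.

Variables (i j : 'I_m.+1).
Hypothesis neq_ij : i <> j.

Lemma rot_trm t : trm (rot i j t) = rot i j (- t).
Proof.
by apply: M_inj; rewrite (M_trm (rot i j t)) !M_rot rotM_tr //; [exact: p_sym | exact: p_anti].
Qed.

Lemma rot_orthogonal t : orthogonal (rot i j t).
Proof.
apply: M_inj; rewrite M_mxm (M_trm (rot i j t)) M_rot M_idm rotM_orth //;
  [exact: p_sym | exact: p_sq | exact: p_anti].
Qed.

Lemma rot_det t : det (rot i j t) = 1.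
Proof. by rewrite detE M_rot rotM_det //; [exact: p_sym | exact: p_sq | exact: p_anti]. Qed.

Local Open Scope R_scope.

Lemma rot_entry t (a : mat n) r q :
  mxm (rot i j t) a r q = ch t * a r q + sh t * ((J p i j *m M a)%R r q).
Proof.
have -> : mxm (rot i j t) a r q = M (mxm (rot i j t) a) r q by rewrite mxE.
by rewrite M_mxm M_rot mul_lin_l !mxE.
Qed.

Lemma coef_rot_i t x : coef (mxv (rot i j t) x) i = cos t * coef x i + sin t * coef x j.
Proof.
rewrite coef_mxv M_rot rotM_conj_i; [|exact: p_sym | exact: p_sq | exact: p_anti | by []].
by rewrite qf_lin -!coefE.
Qed.

Lemma coef_rot_j t x : coef (mxv (rot i j t) x) j = cos t * coef x j - sin t * coef x i.
Proof.
rewrite coef_mxv M_rot rotM_conj_j; [|exact: p_sym | exact: p_sq | exact: p_anti | by []].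
by rewrite -scaleNr qf_lin -!coefE mulNr.
Qed.

Lemma coef_rot_k k t x : k <> i -> k <> j -> coef (mxv (rot i j t) x) k = coef x k.
Proof.
move=> neq_ki neq_kj; rewrite coef_mxv M_rot rotM_conj_k //;
  [by rewrite -coefE | exact: p_sym | exact: p_sq | exact: p_anti].
Qed.

(* R_ij(t) rotates (coef x i, coef x j), hence preserves |pi_C(x)|. *)
Lemma pi_sqnorm_rot t x : pi_sqnorm (mxv (rot i j t) x) = pi_sqnorm x.
Proof.
have neq_ji : j != i by apply/eqP => eq_ji; apply: neq_ij.
rewrite /pi_sqnorm /rsum (bigD1 i) //= (bigD1 j) ?neq_ji //=.
rewrite [in RHS](bigD1 i) //= [in RHS](bigD1 j) ?neq_ji //= coef_rot_i coef_rot_j.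
rewrite (eq_bigr (fun k => (coef x k * coef x k)%R)); last first.
  by move=> k /andP [neq_ki neq_kj]; rewrite coef_rot_k //; apply/eqP.
rewrite !RmultE !RminusE !RplusE -[(coef x i * _)%R]mul1r -[(coef x j * _)%R]mul1r.
by rewrite -(cos_sin_sq t); ring.
Qed.

End PiCoefficients.

Section GivensReduction.
Local Open Scope R_scope.

Lemma givens_angle (a b : R) : exists t,
  cos t * a + sin t * b = sqrt (a * a + b * b) /\ cos t * b - sin t * a = 0.
Proof.
set r := sqrt (a * a + b * b).
have sq_ge0 : 0 <= a * a + b * b by nra.
have rr : r * r = a * a + b * b by rewrite /r sqrt_sqrt.
have r_ge0 : 0 <= r by apply: sqrt_pos.
case: (Req_dec r 0) => [r0 | r_neq0].
  have a0 : a = 0 by nra.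
  have b0 : b = 0 by nra.
  by exists 0; rewrite r0 a0 b0; split; ring.
have r_gt0 : 0 < r by lra.
set c := a / r.
have c_bound : -1 <= c <= 1.
  by rewrite /c; split; apply/(Rmult_le_reg_r r) => //;
    rewrite /Rdiv Rmult_assoc Rinv_l //; nra.
have sqrt_c : sqrt (1 - c²) = Rabs b / r.
  have -> : 1 - c² = (b / r)² by rewrite /c /Rsqr; field_simplify_eq; [nra | lra].
  by rewrite sqrt_Rsqr_abs /Rdiv Rabs_mult Rabs_inv (Rabs_right r) //; lra.
have good t : cos t = c -> sin t = b / r -> cos t * a + sin t * b = r /\ cos t * b - sin t * a = 0.
  move=> -> ->; rewrite /c; split; last by field; lra.
  apply/(Rmult_eq_reg_r r); last lra.
  by field_simplify; [rewrite /= !Rmult_1_r rr; lra | lra].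
case: (Rle_lt_dec 0 b) => b_sign.
- exists (acos c); apply: good; first by rewrite cos_acos.
  by rewrite sin_acos // sqrt_c Rabs_right; lra.
- exists (- acos c); apply: good; first by rewrite cos_neg cos_acos.
  by rewrite sin_neg sin_acos // sqrt_c Rabs_left //; field; lra.
Qed.

Variables (n m : nat) (P : 'I_m.+1 -> mat n).
Hypothesis hP : clifford_system P.

Lemma givens_step y (j : 'I_m.+1) : j <> ord0 -> exists t,
  coef P (mxv (rot P ord0 j t) y) ord0 =
    sqrt (coef P y ord0 * coef P y ord0 + coef P y j * coef P y j) /\
  coef P (mxv (rot P ord0 j t) y) j = 0 /\
  forall k, k <> ord0 -> k <> j -> coef P (mxv (rot P ord0 j t) y) k = coef P y k.
Proof.
move=> neq_j0; have neq_0j := not_eq_sym neq_j0.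
have [t [ht0 htj]] := givens_angle (coef P y ord0) (coef P y j).
exists t; split; [|split].
- by rewrite (coef_rot_i hP neq_0j) ht0.
- by rewrite (coef_rot_j hP neq_0j) htj.
- by move=> k neq_k0 neq_kj; rewrite (coef_rot_k hP neq_0j).
Qed.

Definition psum x k := \big[Rplus/0]_(j < m.+1 | (j <= k)%N) (coef P x j * coef P x j).

Lemma psum0 x : psum x 0 = coef P x ord0 * coef P x ord0.
Proof. by rewrite /psum (big_pred1 ord0) // => j; rewrite /= leqn0. Qed.

Lemma psumS x k (lt_k1 : (k.+1 < m.+1)%N) :
  psum x k.+1 = psum x k + coef P x (Ordinal lt_k1) * coef P x (Ordinal lt_k1).
Proof.
rewrite /psum (bigD1 (Ordinal lt_k1)) //= Rplus_comm; congr (_ + _).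
by apply: eq_bigl => j; rewrite -val_eqE /= andbC -ltn_neqAle ltnS.
Qed.

Lemma psum_full x : psum x m = pi_sqnorm P x.
Proof. by apply: eq_bigl => j; rewrite -ltnS ltn_ord. Qed.

(* y is x after the Givens steps for P_1, ..., P_k: the first k + 1
   coefficients of x are concentrated in the nonnegative coefficient of P_0. *)
Definition reduced_upto x y k : Prop :=
  coef P y ord0 * coef P y ord0 = psum x k /\
  ((0 < k)%N -> 0 <= coef P y ord0) /\
  (forall j : 'I_m.+1, (0 < j <= k)%N -> coef P y j = 0) /\
  (forall j : 'I_m.+1, (k < j)%N -> coef P y j = coef P x j).

Lemma reduced_upto0 x : reduced_upto x x 0.
Proof. by split; [rewrite psum0 | split => //; split => // j; rewrite ltnNge andNb]. Qed.

Lemma reduced_uptoS x y k (lt_k1 : (k.+1 < m.+1)%N) : reduced_upto x y k ->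
  exists t, reduced_upto x (mxv (rot P ord0 (Ordinal lt_k1) t) y) k.+1.
Proof.
move=> [y0 [_ [y_zero y_same]]]; set j1 := Ordinal lt_k1.
have neq_j10 : j1 <> ord0 by move/(congr1 val).
have [t [z0 [zj1 z_same]]] := givens_step y neq_j10.
have y_j1 : coef P y j1 = coef P x j1 by apply: y_same; rewrite /= ltnSn.
exists t; split; [|split; [|split]].
- have sq_ge0 : 0 <= coef P y ord0 * coef P y ord0 + coef P y j1 * coef P y j1 by nra.
  by rewrite z0 sqrt_sqrt // psumS y0 y_j1.
- by move=> _; rewrite z0; apply: sqrt_pos.
- move=> j /andP [j_gt0 j_le]; case: (eqVneq j j1) => [-> // | neq_jj1].
  have neq_val : val j != k.+1 by apply: contra_neq neq_jj1 => eq_val; apply: val_inj.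
  rewrite z_same; [|by move=> j0; rewrite j0 in j_gt0 | exact/eqP].
  by apply: y_zero; rewrite j_gt0 -ltnS ltn_neqAle neq_val j_le.
- move=> j lt_k1j; have lt_kj := ltnW lt_k1j.
  rewrite z_same; [exact: y_same | by move=> j0; rewrite j0 in lt_kj |].
  by move=> eq_jj1; rewrite eq_jj1 /= ltnn in lt_k1j.
Qed.

Variable S : mat n -> Prop.
Hypothesis S_id : S (Defs.idm n).
Hypothesis S_rot : forall i j t a, i <> j -> S a -> S (mxm (rot P i j t) a).

Lemma givens_reduction_upto x k :
  (k <= m)%N -> exists w, S w /\ reduced_upto x (mxv w x) k.
Proof.
elim: k => [_ | k IH le_k1m].
  by exists (Defs.idm n); rewrite mxv_idm; split; [exact: S_id | exact: reduced_upto0].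
have [w [Sw red]] := IH (ltnW le_k1m).
have lt_k1 : (k.+1 < m.+1)%N by [].
have [t red'] := reduced_uptoS lt_k1 red.
exists (mxm (rot P ord0 (Ordinal lt_k1) t) w); rewrite mxv_mxm; split => //.
by apply: S_rot => // /(congr1 val).
Qed.

Lemma givens_reduction x : (0 < m)%N -> exists w, S w /\
  forall j, coef P (mxv w x) j = if j == ord0 then sqrt (pi_sqnorm P x) else 0.
Proof.
move=> m_gt0; have [w [Sw [w0 [w0_ge0 [w_zero _]]]]] := givens_reduction_upto x (leqnn m).
exists w; split => // j; case: (eqVneq j ord0) => [-> | neq_j0].
  by rewrite -psum_full -w0 sqrt_square //; apply: w0_ge0.
by apply: w_zero; rewrite -[(j <= m)%N]ltnS ltn_ord andbT lt0n.
Qed.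

End GivensReduction.

Section GeneratedGroup.
Local Open Scope R_scope.
Variables (n m : nat) (P : 'I_m.+1 -> mat n).
Hypothesis hP : clifford_system P.
Variable G : mat n -> Prop.
Hypothesis G_SO : SO_subgroup G.
Hypothesis G_orbits : forall x y, sphere x -> sphere y ->
  (clifford_leaf P x y <-> exists g, G g /\ mxv g x = y).

Definition generator (g : mat n) : Prop := G g \/ exists i j t, i <> j /\ g = rot P i j t.

Inductive product : mat n -> Prop :=
  | product_id : product (Defs.idm n)
  | product_cons g a : generator g -> product a -> product (mxm g a).

Lemma generator_product g : generator g -> product g.
Proof. by move=> gen_g; rewrite -(mxm_idr g); apply: product_cons => //; apply: product_id. Qed.

Lemma product_rot i j t a : i <> j -> product a -> product (mxm (rot P i j t) a).
Proof. by move=> neq_ij; apply: product_cons; right; exists i, j, t. Qed.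

Lemma product_mul a b : product a -> product b -> product (mxm a b).
Proof.
move=> pa pb; elim: pa => [|g c gen_g _ IH]; first by rewrite mxm_idl.
by rewrite mxm_assoc; apply: product_cons.
Qed.

Lemma generator_trm g : generator g -> generator (trm g).
Proof.
case=> [Gg | [i [j [t [neq_ij ->]]]]].
  by left; case: G_SO => _ [_ [_ G_trm]]; apply: G_trm.
by right; exists i, j, (- t); split => //; apply: rot_trm.
Qed.

Lemma product_trm a : product a -> product (trm a).
Proof.
elim=> [|g b gen_g _ IH]; first by rewrite trm_idm; apply: product_id.
by rewrite trm_mxm; apply: product_mul => //; apply: generator_product; apply: generator_trm.
Qed.

Lemma generator_SO g : generator g -> orthogonal g /\ det g = 1.
Proof.
case=> [Gg | [i [j [t [neq_ij ->]]]]]; first by case: G_SO => G_sub _; apply: G_sub.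
by split; [apply: rot_orthogonal | apply: rot_det].
Qed.

Lemma product_SO a : product a -> orthogonal a /\ det a = 1.
Proof.
elim=> [|g b gen_g _ [ob db]]; first by rewrite /orthogonal trm_idm mxm_idl det_idm.
have [og dg] := generator_SO gen_g; split; last by rewrite det_mxm dg db mulr1.
by rewrite /orthogonal trm_mxm mxm_assoc -(mxm_assoc (trm g)) og mxm_idl.
Qed.

(* The generators preserve |pi_C| on the sphere: elements of G preserve the
   fibres of pi_C, and the R_ij(t) rotate the coefficient vector. *)
Lemma generator_pi g z : generator g -> sphere z -> pi_sqnorm P (mxv g z) = pi_sqnorm P z.
Proof.
case=> [Gg | [i [j [t [neq_ij ->]]]]] sz; last exact: pi_sqnorm_rot.
have sgz : sphere (mxv g z).
  by apply: sphere_orthogonal => //; apply: (proj1 (generator_SO (or_introl Gg))).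
have leaf : clifford_leaf P z (mxv g z) by apply/(G_orbits sz sgz); exists g.
by rewrite -(mip_pi hP (mxv g z)) -leaf mip_pi.
Qed.

Lemma product_pi a z : product a -> sphere z -> pi_sqnorm P (mxv a z) = pi_sqnorm P z.
Proof.
move=> pa; elim: pa z => [|g b gen_g pb IH] z sz; first by rewrite mxv_idm.
have sbz : sphere (mxv b z).
  by apply: sphere_orthogonal => //; apply: (proj1 (product_SO pb)).
by rewrite mxv_mxm generator_pi // IH.
Qed.

(* G' is the closure of the set of products: the intersection of the closed
   sets containing all products. *)
Definition Gbar (A : mat n) : Prop :=
  forall C : mat n -> Prop, Defs.closed_set C -> (forall B, product B -> C B) -> C A.

Lemma Gbar_closed : Defs.closed_set Gbar.
Proof. by move=> s A hs cvs C Cclosed Cprod; apply: (Cclosed s) => // k; apply: hs. Qed.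

Lemma product_Gbar a : product a -> Gbar a.
Proof. by move=> pa C _ Cprod; apply: Cprod. Qed.

Lemma Gbar_ind (Q : mat n -> Prop) :
  Defs.closed_set Q -> (forall B, product B -> Q B) -> forall A, Gbar A -> Q A.
Proof. by move=> Qclosed Qprod A GA; apply: GA. Qed.

(* G' is a subgroup of SO(n): multiplication and transposition are continuous,
   so they map G' into G' by closure. *)
Lemma Gbar_mul x y : Gbar x -> Gbar y -> Gbar (mxm x y).
Proof.
have right_product b : product b -> forall x, Gbar x -> Gbar (mxm x b).
  move=> pb; apply: Gbar_ind => [|a pa]; last exact: product_Gbar (product_mul pa pb).
  apply: (closed_preimage (f := fun X => mxm X b)) Gbar_closed => s A cvs.
  exact: cv_mxm cvs (cv_cstm b).
move=> Gx; move: y; apply: Gbar_ind => [|b pb]; last exact: right_product.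
apply: (closed_preimage (f := mxm x)) Gbar_closed => s A cvs.
exact: cv_mxm (cv_cstm x) cvs.
Qed.

Lemma Gbar_trm x : Gbar x -> Gbar (trm x).
Proof.
move: x; apply: Gbar_ind => [|a pa]; last exact: product_Gbar (product_trm pa).
by apply: closed_preimage Gbar_closed => s A; apply: cv_trm.
Qed.

Lemma Gbar_SO_subgroup : SO_subgroup Gbar.
Proof.
split; first by apply: Gbar_ind; [apply: closed_SO | apply: product_SO].
split; first exact: product_Gbar product_id.
by split; [apply: Gbar_mul | apply: Gbar_trm].
Qed.

(* G' preserves |pi_C| on the sphere, since |pi_C(A z)| is continuous in A. *)
Lemma cv_pi_sqnorm (s : nat -> mat n) A z : mcv s A ->
  Un_cv (fun k => pi_sqnorm P (mxv (s k) z)) (pi_sqnorm P (mxv A z)).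
Proof.
move=> cvs; apply: cv_rsum => k; have cv_sz := cv_mxv cvs (cv_cstv z).
have cv_coef := cv_dot (cv_mxv (cv_cstm (P k)) cv_sz) cv_sz.
exact: (CV_mult _ _ _ _ cv_coef cv_coef).
Qed.

Lemma Gbar_pi a z : Gbar a -> sphere z -> pi_sqnorm P (mxv a z) = pi_sqnorm P z.
Proof.
move=> Ga sz; move: a Ga; apply: Gbar_ind => [s A hs cvs | a pa]; last exact: product_pi.
apply: (UL_sequence _ _ _ (cv_pi_sqnorm z cvs)).
by apply: (cv_ext (u := fun _ => pi_sqnorm P z)) => [k|]; [rewrite hs | apply: cv_const].
Qed.

(* The orbits of G' are the FKM leaves: Givens reduction moves two points with
   the same |pi_C| into one fibre of pi_C, where G acts transitively. *)
Lemma Gbar_orbits x y : (0 < m)%N -> sphere x -> sphere y ->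
  (fkm_leaf P x y <-> exists g, Gbar g /\ mxv g x = y).
Proof.
move=> m_gt0 sx sy; rewrite /fkm_leaf /mnorm !(mip_pi hP); split; last first.
  by move=> [g [Gg <-]]; rewrite Gbar_pi.
move=> eq_norm.
have [u [pu ux]] := givens_reduction hP product_id product_rot x m_gt0.
have [v [pv vy]] := givens_reduction hP product_id product_rot y m_gt0.
have [[ou _] [ov _]] := (product_SO pu, product_SO pv).
have same_fibre : clifford_leaf P (mxv u x) (mxv v y).
  rewrite /clifford_leaf !pi_CE; apply: functional_extensionality => a.
  by apply: functional_extensionality => b; apply: eq_bigr => k _; rewrite ux vy eq_norm.
have [g [Gg gux]] :=
  proj1 (G_orbits (sphere_orthogonal ou sx) (sphere_orthogonal ov sy)) same_fibre.
exists (mxm (trm v) (mxm g u)); split; last by rewrite !mxv_mxm gux orthogonal_back.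
apply: product_Gbar; apply: product_mul; first exact: product_trm.
by apply: product_cons => //; left.
Qed.

Hypothesis G_conn : connected_set G.

Lemma generator_link g a : generator g -> product a ->
  exists T, connected_set T /\ (forall X, T X -> Gbar X) /\ T a /\ T (mxm g a).
Proof.
move=> gen_g pa; case: (gen_g) => [Gg | [i [j [t [neq_ij eq_g]]]]].
- exists (fun X => exists h, G h /\ X = mxm h a); split.
    by apply: image_connected G_conn _ => A s cvs; apply: cv_mxm cvs (cv_cstm a).
  split; first by move=> _ [h [Gh ->]]; apply: product_Gbar; apply: product_cons => //; left.
  split; last by exists g.
  by exists (Defs.idm n); rewrite mxm_idl; split => //; case: G_SO => _ [].
- exists (fun X => exists s, X = mxm (rot P i j s) a); split.
    apply: (path_connected (f := fun s => mxm (rot P i j s) a)) => r q.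
    rewrite (_ : (fun s => _) = fun s => ch s * a r q + sh s * ((J (p P) i j *m M a)%R r q)).
      exact: continuity_ch_sh_comb.
    by apply: functional_extensionality => s; apply: rot_entry.
  split; first by move=> _ [s ->]; apply: product_Gbar; apply: product_rot.
  by split; [exists 0; rewrite rot0 mxm_idl | exists t; rewrite eq_g].
Qed.

Lemma product_same_side U V : rel_open Gbar U -> rel_open Gbar V ->
  (forall A, Gbar A -> U A \/ V A) -> (forall A, Gbar A -> U A -> V A -> False) ->
  forall a, product a -> (U a <-> U (Defs.idm n)).
Proof.
move=> openU openV cover disj a; elim=> [|g b gen_g pb IH]; first by [].
have [T [Tconn [TG [Tb Tgb]]]] := generator_link gen_g pb.
have side := connected_same_side Tconn TG openU openV cover disj.
by rewrite -IH; split; [apply: side Tgb Tb | apply: side Tb Tgb].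
Qed.

(* G' is connected: a separation of G' would leave the closed set G' minus
   the side of Id containing all products, hence all of G'. *)
Lemma Gbar_connected : connected_set Gbar.
Proof.
move=> U V openU openV cover disj [A [GA UA]] [B [GB VB]].
have side := product_same_side openU openV cover disj.
case: (classic (U (Defs.idm n))) => [U_id | nU_id].
- have notV X : product X -> Gbar X /\ ~ V X.
    move=> pX; split; first exact: product_Gbar.
    by move=> VX; apply: (disj X (product_Gbar pX)) => //; apply/(side X pX).
  by have [_ []] := Gbar_ind (closed_diff_open Gbar_closed openV) notV GB.
- have notU X : product X -> Gbar X /\ ~ U X.
    by move=> pX; split; [exact: product_Gbar | move=> UX; apply/nU_id/(side X pX)].
  by have [_ []] := Gbar_ind (closed_diff_open Gbar_closed openU) notU GA.
Qed.

End GeneratedGroup.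

Theorem proposition5p1 (l m : nat) (P : 'I_m.+1 -> mat (2 * l)) :
  (1 <= m)%N -> (m.+1 < l)%N ->
  clifford_system P ->
  homogeneous_foliation (clifford_leaf P) ->
  homogeneous_foliation (fkm_leaf P).
Proof.
move=> m_gt0 _ hP [G [G_SO [_ [G_conn G_orbits]]]].
exists (Gbar P G); split; first exact: Gbar_SO_subgroup.
split; first exact: Gbar_closed.
split; first exact: Gbar_connected.
by move=> x y sx sy; apply: Gbar_orbits.
Qed.
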